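(* Let $(G,L,v)$ be a reachable triple, $i\in L(v)$ a color, and $D$ a nonnegative integer. Then (1) if $\deg_G(v)=2$, then $P(G,L,v,i,D)\ge \frac1{13}$; (2) if $\deg_G(v)\le1$, then $P(G,L,v,i,D)\ge\frac16$.
   Context: Colors are $[4]=\{1,2,3,4\}$. A list-coloring instance $(G,L)$ is a finite simple graph $G=(V,E)$ with $L:V\to 2^{[4]}$. For a vertex $v$, $G_v$ is $G$ with $v$ and its incident edges removed, and $G_{v,w}=(G_v)_w$. If $v$ has neighbors $v_1,\dots,v_d$ (in a fixed order), then for $k\in[d]$ and a color $j$, $L_{k,j}$ is the list assignment on $G_v$ with $L_{k,j}(v_\ell)=L(v_\ell)\setminus\{j\}$ for $\ell<k$ and $L_{k,j}(u)=L(u)$ for all other vertices $u$ (so $L_{1,j}=L$). A triple $(G,L,v)$ with $v\in V$ is reachable if $\deg_G(u)\le3$ and $|L(u)|\ge\deg_G(u)+1$ for every $u\in V$, and moreover $\deg_G(v)\le2$ and $|L(v)|\ge\deg_G(v)+2$. The procedure $P(G,L,v,i,D)$ ($i\in[4]$, $D$ an integer) is defined recursively (empty products equal $1$): (a) If $i\notin L(v)$, return $0$. Otherwise, if $D\le 0$ or $\deg_G(v)=0$, return $1/|L(v)|$. (b) If $\deg_G(v)=1$ with neighbor $v_1$: let $x=P(G_v,L,v_1,i,D-1)$. If $|L(v)|=2$, say $L(v)=\{i,j\}$, let $y=P(G_v,L,v_1,j,D-1)$ and return $\frac{1-x}{2-x-y}$. If $|L(v)|=4$, return $\frac{1-x}{3}$.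 If $|L(v)|=3$, let $j$ be the unique color in $[4]\setminus L(v)$, $y=P(G_v,L,v_1,j,D-1)$, and return $\frac{1-x}{2+y}$. (c) If $\deg_G(v)=2$: order its neighbors $v_1,v_2$ so that $\deg_G(v_1)\ge\deg_G(v_2)$ and, if $\deg_G(v_1)=\deg_G(v_2)=1$, so that $i\notin L(v_1)$ implies $i\notin L(v_2)$. Let $u_1,\dots,u_{d_1}$ be the neighbors of $v_1$ in $G_v$ (fixed order) and for $k\in[d_1]$, $w\in[4]$ let $L'_{k,w}$ be the list assignment on $G_{v,v_1}$ with $L'_{k,w}(u_\ell)=L(u_\ell)\setminus\{w\}$ for $\ell<k$ and $L'_{k,w}(u)=L(u)$ otherwise. Set $x_{k,w}=P(G_{v,v_1},L'_{k,w},u_k,w,D-1)$ for $k\in[d_1]$, $w\in L(v_1)$. For $j\in L(v)$ set $f_j=0$ if $j\notin L(v_1)$ and otherwise $f_j=\frac{\prod_{k=1}^{d_1}(1-x_{k,j})}{\sum_{w\in L(v_1)}\prod_{k=1}^{d_1}(1-x_{k,w})}$, and set $y_j=P(G_v,L_{2,j},v_2,j,D-1)$. Return $\frac{(1-f_i)(1-y_i)}{\sum_{j\in L(v)}(1-f_j)(1-y_j)}$. (d) If $\deg_G(v)=3$ with neighbors $v_1,v_2,v_3$: for $j\in L(v)$ let $x_j=P(G_v,L_{1,j},v_1,j,D-1)$, $y_j=P(G_v,L_{2,j},v_2,j,D-1)$, $z_j=P(G_v,L_{3,j},v_3,j,D-1)$, and return $\frac{(1-x_i)(1-y_i)(1-z_i)}{\sum_{j\in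 L(v)}(1-x_j)(1-y_j)(1-z_j)}$. For reachable triples, all recursive calls are again on reachable triples and case (d) never occurs. *)

From HB Require Import structures.
From mathcomp Require Import all_boot all_order all_algebra.
Set Implicit Arguments. Unset Strict Implicit. Unset Printing Implicit Defensive.
Import Order.TTheory GRing.Theory Num.Theory.

(* Colors [4] = {1,2,3,4} are represented by 'I_4 (color c <-> ordinal c-1).
   A finite simple graph is a finType V with a symmetric irreflexive
   relation adj; the "current graph" in the recursion is the subgraph induced
   by a vertex set S : {set V} (so G_v is S :\ v). *)

Section Proc.
Variables (V : finType) (adj : rel V).

Definition nbhd (S : {set V}) (v : V) : {set V} := [set u in S | adj v u].
Definition deg (S : {set V}) (v : V) : nat := #|nbhd S v|.

(* "a fixed order" of the neighbours: nbr S v lists the neighbours of v in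
   the graph induced by S, in some order (arbitrary, given as a parameter). *)
Definition nbr_order (nbr : {set V} -> V -> seq V) : Prop :=
  forall S v, perm_eq (nbr S v) (enum (nbhd S v)).

Definition Lrem (L : V -> {set 'I_4}) (us : seq V) (j : 'I_4) : V -> {set 'I_4} :=
  fun u => if u \in us then L u :\ j else L u.

Definition reachable (S : {set V}) (L : V -> {set 'I_4}) (v : V) : Prop :=
  [/\ forall u, u \in S -> (deg S u <= 3)%N /\ (deg S u + 1 <= #|L u|)%N,
      v \in S, (deg S v <= 2)%N & (deg S v + 2 <= #|L v|)%N].

Variable nbr : {set V} -> V -> seq V.

Local Open Scope ring_scope.

Definition otherc (A : {set 'I_4}) (d : 'I_4) : 'I_4 :=
  odflt d [pick j in A].

Definition Pstep (rec : {set V} -> (V -> {set 'I_4}) -> V -> 'I_4 -> rat)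
    (S : {set V}) (L : V -> {set 'I_4}) (v : V) (i : 'I_4) : rat :=
  let Sv := S :\ v in
  match nbr S v with
  | [:: v1] =>
      let x := rec Sv L v1 i in
      if #|L v| == 2%N then
        let j := otherc (L v :\ i) i in
        let y := rec Sv L v1 j in (1 - x) / (2 - x - y)
      else if #|L v| == 4%N then (1 - x) / 3%:R
      else if #|L v| == 3%N then
        let j := otherc (~: L v) i in
        let y := rec Sv L v1 j in (1 - x) / (2 + y)
      else 0
  | [:: a; b] =>
      let '(v1, v2) :=
        if (deg S a < deg S b)%N then (b, a)
        else if [&& deg S a == 1%N, deg S b == 1%N, i \notin L a & i \in L b]
             then (b, a) else (a, b) in
      let us := nbr Sv v1 in
      let Svv := Sv :\ v1 in
      let pr (w : 'I_4) : rat :=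
        \prod_(k < size us) (1 - rec Svv (Lrem L (take k us) w) (nth v us k) w) in
      let f (j : 'I_4) : rat :=
        if j \notin L v1 then 0 else pr j / \sum_(w in L v1) pr w in
      let y (j : 'I_4) : rat := rec Sv (Lrem L [:: v1] j) v2 j in
      (1 - f i) * (1 - y i) / \sum_(j in L v) (1 - f j) * (1 - y j)
  | [:: v1; v2; v3] =>
      let x (j : 'I_4) := rec Sv L v1 j in
      let y (j : 'I_4) := rec Sv (Lrem L [:: v1] j) v2 j in
      let z (j : 'I_4) := rec Sv (Lrem L [:: v1; v2] j) v3 j in
      (1 - x i) * (1 - y i) * (1 - z i) /
        \sum_(j in L v) (1 - x j) * (1 - y j) * (1 - z j)
  | _ => 0   (* degree 0 handled in P; degree >= 4 does not occur *)
  end.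

(* The procedure P(G,L,v,i,D), G the graph induced by S, D a natural number
   (the statement only concerns D >= 0, and every recursive call made with
   D > 0 has D-1 >= 0). *)
Fixpoint P (S : {set V}) (L : V -> {set 'I_4}) (v : V) (i : 'I_4) (D : nat)
    {struct D} : rat :=
  if i \notin L v then 0
  else match D with
       | O => 1 / #|L v|%:R
       | D'.+1 =>
           if deg S v == 0%N then 1 / #|L v|%:R
           else Pstep (fun S' L' v' i' => P S' L' v' i' D') S L v i
       end.

End Proc.

From Pilot Require Import Defs.
From HB Require Import structures.
From mathcomp Require Import all_boot all_order all_algebra.
From mathcomp Require Import lra zify.
Set Implicit Arguments. Unset Strict Implicit. Unset Printing Implicit Defensive.
Import Order.TTheory GRing.Theory Num.Theory.
Local Open Scope ring_scope.

(* By induction on D, every value of P on a reachable triple with i in L(v)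
   lies between 1/13 (degree 2), resp. 1/6 (degree <= 1), and 1/2; in
   particular all recursive calls return values in [0, 1/2].  In degree 2, L(v) contains all four colours and
   f is a probability distribution on L(v1) with weights in [2^-d, 1], where
   d <= 2 is the degree of v1 in G_v and at least d+1 colours of v1 differ
   from i; hence f_i <= 1/(1 + (d+1) 2^-d) <= 4/7.  As 1 - y_j lies in
   [1/2, 1], the returned ratio is at least (1 - f_i)/(5 + f_i) >= 1/13. *)

Section Arithmetic.
Variable R : realFieldType.
Implicit Types (a c p r x y : R).

Lemma inv_nat_bounds (n : nat) : (2 <= n <= 4)%N -> 1/4 <= (1 / n%:R : R) <= 1/2.
Proof.
move=> n24; have [->|[->|->]] : (n = 2 \/ n = 3 \/ n = 4)%N by lia.
all: lra.
Qed.

Lemma half_pow_mulSn (n : nat) : (n <= 2)%N -> 3/4 <= (1/2 : R) ^+ n *+ n.+1.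
Proof.
move=> n2; have [->|[->|->]] : (n = 0 \/ n = 1 \/ n = 2)%N by lia.
all: rewrite -mulr_natr ?expr0 ?expr1 ?expr2; lra.
Qed.

Lemma prod_one_sub_bounds (n : nat) (a : 'I_n -> R) :
  (forall k, 0 <= a k <= 1/2) -> (1/2) ^+ n <= \prod_(k < n) (1 - a k) <= 1.
Proof.
move=> a_bd; apply/andP; split.
- rewrite -[n in _ ^+ n]card_ord -prodr_const.
  by apply: ler_prod => k _; have := a_bd k; lra.
- apply: le_trans (_ : _ <= \prod_(k < n) 1) _; last by rewrite big1.
  by apply: ler_prod => k _; have := a_bd k; lra.
Qed.

Lemma one_sub_div_two_add_bounds x y :
  0 <= x <= 1/2 -> 0 <= y <= 1/2 -> 1/6 <= (1 - x) / (2 + y) <= 1/2.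
Proof.
move=> x_bd y_bd; have y2_gt0 : 0 < 2 + y by lra.
by apply/andP; split; [rewrite ler_pdivlMr | rewrite ler_pdivrMr]; lra.
Qed.

Lemma mul_one_sub_half_bounds x y :
  0 <= x -> 0 <= y <= 1/2 -> x / 2 <= x * (1 - y) <= x.
Proof.
move=> x_ge0 y_bd; have h1 : 0 <= x * (1/2 - y) by apply: mulr_ge0; lra.
have h2 : 0 <= x * y by apply: mulr_ge0; lra.
by apply/andP; split; lra.
Qed.

Lemma share_bounds a r x :
  0 <= x <= 4/7 -> (1 - x) / 2 <= a <= 1 - x -> (2 + x) / 2 <= r <= 2 + x ->
  1/13 <= a / (a + r) <= 1/2.
Proof.
move=> x_bd a_bd r_bd; have ar_gt0 : 0 < a + r by lra.
by apply/andP; split; [rewrite ler_pdivlMr | rewrite ler_pdivrMr]; lra.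
Qed.

Lemma share_le47 p r : 0 < p <= 1 -> 3/4 <= r -> p / (p + r) <= 4/7.
Proof.
move=> p_bd r_bd; have pr_gt0 : 0 < p + r by lra.
by rewrite ler_pdivrMr //; lra.
Qed.

Lemma colour_share_bounds (T : finType) (f y : T -> R) (i : T) :
  #|T| = 4%N -> (forall j, 0 <= f j <= 1) -> (forall j, 0 <= y j <= 1/2) ->
  \sum_j f j = 1 -> f i <= 4/7 ->
  1/13 <= (1 - f i) * (1 - y i) / \sum_j (1 - f j) * (1 - y j) <= 1/2.
Proof.
move=> card4 f_bd y_bd sum_f fi_le.
have sum_rest : \sum_(j | j != i) (1 - f j) = 2 + f i.
  have : \sum_j (1 - f j) = 3.
    by rewrite sumrB sum_f sumr_const card4; lra.
  by rewrite (bigD1 i) //=; lra.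
rewrite (bigD1 i) //=; apply: (share_bounds (x := f i)).
- by have := f_bd i; lra.
- by apply: mul_one_sub_half_bounds; [have := f_bd i; lra | exact: y_bd].
- rewrite -sum_rest mulr_suml; apply/andP; split; apply: ler_sum => j _.
  all: have fj_ge0 : 0 <= 1 - f j by have := f_bd j; lra.
  all: by have /andP[] := mul_one_sub_half_bounds fj_ge0 (y_bd j); lra.
Qed.

Definition normalized (T : finType) (A : {set T}) (p : T -> R) (j : T) : R :=
  if j \notin A then 0 else p j / \sum_(w in A) p w.

Section Normalized.
Variables (T : finType) (A : {set T}) (p : T -> R).
Hypothesis p_gt0 : forall w, 0 < p w.

Lemma normalized_ge0_le1 j : 0 <= normalized A p j <= 1.
Proof.
rewrite /normalized; case: ifPn => [_|/negPn jA]; first lra.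
have rest_ge0 : 0 <= \sum_(w in A :\ j) p w by apply: sumr_ge0 => w _; exact: ltW.
have pj_gt0 := p_gt0 j; rewrite (big_setD1 _ jA) /=.
have pos : 0 < p j + \sum_(w in A :\ j) p w by lra.
by apply/andP; split; [apply: divr_ge0 | rewrite ler_pdivrMr]; lra.
Qed.

Lemma sum_normalized : A != set0 -> \sum_j normalized A p j = 1.
Proof.
case/set0Pn=> w0 w0A; have sum_gt0 : 0 < \sum_(w in A) p w.
  rewrite (big_setD1 _ w0A) /=; apply: ltr_wpDr; last exact: p_gt0.
  by apply: sumr_ge0 => w _; exact: ltW.
rewrite /normalized; under eq_bigr do rewrite if_neg.
by rewrite -big_mkcond /= -mulr_suml divff ?gt_eqF.
Qed.

Lemma normalized_le (c : R) i :
  (forall w, c <= p w <= 1) -> 3/4 <= c *+ #|A :\ i| -> normalized A p i <= 4/7.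
Proof.
move=> p_bd c_le; rewrite /normalized; case: ifPn => [_|/negPn iA]; first lra.
rewrite (big_setD1 _ iA) /=; apply: share_le47.
  by have := p_bd i; have := p_gt0 i; lra.
apply: le_trans c_le _; rewrite -sumr_const.
by apply: ler_sum => w _; have := p_bd w; lra.
Qed.

End Normalized.
End Arithmetic.

Lemma leq_card_setD1 (T : finType) (A : {set T}) (x : T) : (#|A| <= #|A :\ x|.+1)%N.
Proof. by rewrite (cardsD1 x A); case: (x \in A). Qed.

Section Reachability.
Variables (V : finType) (adj : rel V).
Hypotheses (adj_sym : symmetric adj) (adj_irr : irreflexive adj).
Implicit Types (S : {set V}) (L : V -> {set 'I_4}) (u v : V) (j : 'I_4).

Local Notation nbhd := (nbhd adj).
Local Notation deg := (deg adj).

Definition admissible S L :=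
  forall u, u \in S -> (deg S u <= 3)%N /\ (deg S u + 1 <= #|L u|)%N.

Lemma deg_setD1_le S v u : (deg (S :\ v) u <= deg S u)%N.
Proof.
by apply/subset_leq_card/subsetP => x; rewrite !inE => /andP[/andP[_ ->] ->].
Qed.

Lemma deg_setD1_nbhd S v u : v \in S -> u \in nbhd S v ->
  (deg (S :\ v) u).+1 = deg S u.
Proof.
move=> vS; rewrite inE => /andP[_ vu].
rewrite /Defs.deg (cardsD1 v (nbhd S u)) inE vS adj_sym vu /=.
by congr _.+1; apply: eq_card => x; rewrite !inE andbA.
Qed.

Lemma card_Lrem L us j u : (#|L u| <= #|Lrem L us j u|.+1)%N.
Proof. by rewrite /Lrem; case: ifP => // _; apply: leq_card_setD1. Qed.

Lemma admissible_Lrem S L v us j : admissible S L -> v \in S ->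
  {subset us <= nbhd S v} -> admissible (S :\ v) (Lrem L us j).
Proof.
move=> adm vS us_nbhd u; rewrite inE => /andP[_ uS].
have [deg_le3 deg_le_L] := adm u uS; have := deg_setD1_le S v u.
split; first lia.
have := card_Lrem L us j u; case: (boolP (u \in us)) => [/us_nbhd u_nbhd | u_us].
  by have := deg_setD1_nbhd vS u_nbhd; lia.
by rewrite /Lrem (negbTE u_us); lia.
Qed.

Lemma reachable_Lrem S L v us j u : admissible S L -> v \in S ->
  {subset us <= nbhd S v} -> u \in nbhd S v -> u \notin us ->
  reachable adj (S :\ v) (Lrem L us j) u.
Proof.
move=> adm vS us_nbhd u_nbhd u_us.
have [deg_le3 deg_le_L] := adm u (setIdP u_nbhd).1.
have deg_u := deg_setD1_nbhd vS u_nbhd.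
split; [exact: admissible_Lrem | | lia | by rewrite /Lrem (negbTE u_us); lia].
move: u_nbhd; rewrite !inE => /andP[-> vu]; rewrite andbT.
by apply: contraTneq vu => ->; rewrite adj_irr.
Qed.

End Reachability.

Section Procedure.
Variables (V : finType) (adj : rel V).
Hypotheses (adj_sym : symmetric adj) (adj_irr : irreflexive adj).
Variable nbr : {set V} -> V -> seq V.
Hypothesis nbrP : nbr_order adj nbr.
Implicit Types (S : {set V}) (L : V -> {set 'I_4}) (u v : V) (i j w : 'I_4).

Local Notation nbhd := (nbhd adj).
Local Notation deg := (deg adj).
Local Notation reachable := (reachable adj).

Lemma mem_nbr S v u : (u \in nbr S v) = (u \in nbhd S v).
Proof. by rewrite (perm_mem (nbrP S v)) mem_enum. Qed.

Lemma nbr_uniq S v : uniq (nbr S v).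
Proof. by rewrite (perm_uniq (nbrP S v)) enum_uniq. Qed.

Lemma size_nbr S v : size (nbr S v) = deg S v.
Proof. by rewrite (perm_size (nbrP S v)) -cardE. Qed.

Lemma card_list_bounds S L v : reachable S L v ->
  (deg S v + 2 <= #|L v| <= 4)%N.
Proof. by case=> _ _ _ ->; have := max_card (L v); rewrite card_ord. Qed.

Lemma reachable_nbr S L v v1 : reachable S L v -> v1 \in nbr S v ->
  reachable (S :\ v) L v1.
Proof.
case=> adm vS _ _; rewrite mem_nbr => v1_nbhd.
change (reachable (S :\ v) (Lrem L [::] ord0) v1).
exact: reachable_Lrem.
Qed.

Lemma reachable_nbr_Lrem S L v v1 v2 j : reachable S L v ->
  v1 \in nbr S v -> v2 \in nbr S v -> v1 != v2 ->
  reachable (S :\ v) (Lrem L [:: v1] j) v2.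
Proof.
case=> adm vS _ _; rewrite !mem_nbr => v1_nbhd v2_nbhd v12.
apply: reachable_Lrem => //; first by move=> x; rewrite mem_seq1 => /eqP ->.
by rewrite mem_seq1 eq_sym.
Qed.

Lemma reachable_nbr_nbr S L v v1 k w : reachable S L v -> v1 \in nbr S v ->
  let us := nbr (S :\ v) v1 in (k < size us)%N ->
  reachable (S :\ v :\ v1) (Lrem L (take k us) w) (nth v us k).
Proof.
move=> reach_v v1_nbr us lt_k.
have [adm1 v1S _ _] := reachable_nbr reach_v v1_nbr.
apply: reachable_Lrem => //.
- by move=> x /mem_take; rewrite -mem_nbr.
- by rewrite -mem_nbr mem_nth.
- have := take_uniq k.+1 (nbr_uniq (S :\ v) v1).
  by rewrite (take_nth v lt_k) rcons_uniq => /andP[].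
Qed.

Definition bounded_by_half (rec : {set V} -> (V -> {set 'I_4}) -> V -> 'I_4 -> rat) :=
  forall S L v i, reachable S L v -> 0 <= rec S L v i <= 1/2.

Section StepBounds.
Variable rec : {set V} -> (V -> {set 'I_4}) -> V -> 'I_4 -> rat.
Hypothesis rec_bounded : bounded_by_half rec.

Lemma Pstep_deg1_bounds S L v i : reachable S L v -> deg S v = 1%N ->
  1/6 <= Pstep adj nbr rec S L v i <= 1/2.
Proof.
move=> reach_v deg1; have := size_nbr S v; rewrite deg1 /Pstep.
case nbr_v: (nbr S v) => [//|v1 [|//]] _ /=.
have reach_v1 : reachable (S :\ v) L v1.
  by apply: reachable_nbr reach_v _; rewrite nbr_v mem_head.
have x_bd := rec_bounded i reach_v1.
have := card_list_bounds reach_v; rewrite deg1 => card_v.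
have [->|->] /= : #|L v| = 3%N \/ #|L v| = 4%N by lia.
- exact/one_sub_div_two_add_bounds/rec_bounded/reach_v1.
- by lra.
Qed.

Definition colour_weight S L v v1 w : rat :=
  let us := nbr (S :\ v) v1 in
  \prod_(k < size us) (1 - rec (S :\ v :\ v1) (Lrem L (take k us) w) (nth v us k) w).

Lemma colour_weight_bounds S L v v1 w : reachable S L v -> v1 \in nbr S v ->
  (1/2) ^+ deg (S :\ v) v1 <= colour_weight S L v v1 w <= 1.
Proof.
move=> reach_v v1_nbr; rewrite -size_nbr; apply: prod_one_sub_bounds => k.
exact/rec_bounded/reachable_nbr_nbr.
Qed.

Lemma Pstep_deg2_ordered_bounds S L v i v1 v2 :
  reachable S L v -> deg S v = 2%N ->
  v1 \in nbr S v -> v2 \in nbr S v -> v1 != v2 ->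
  let f := normalized (L v1) (colour_weight S L v v1) in
  let y j := rec (S :\ v) (Lrem L [:: v1] j) v2 j in
  1/13 <= (1 - f i) * (1 - y i) / \sum_(j in L v) (1 - f j) * (1 - y j) <= 1/2 :> Prop.
Proof.
move=> reach_v deg2 v1_nbr v2_nbr v12 f y.
have [_ _ deg_v1 card_v1] := reachable_nbr reach_v v1_nbr.
have weight_bd w := colour_weight_bounds w reach_v v1_nbr.
have weight_gt0 w : 0 < colour_weight S L v v1 w.
  by have /andP[+ _] := weight_bd w; apply: lt_le_trans; rewrite exprn_gt0.
have Lv_full : L v = [set: 'I_4].
  apply/eqP; rewrite eqEcard subsetT cardsT card_ord.
  by have := card_list_bounds reach_v; rewrite deg2 => /andP[].
rewrite Lv_full (eq_bigl predT) => [|j]; last by rewrite inE.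
apply: colour_share_bounds; first exact: card_ord.
- exact: normalized_ge0_le1 weight_gt0.
- by move=> j; apply/rec_bounded/reachable_nbr_Lrem.
- by rewrite /f (sum_normalized weight_gt0) // -card_gt0 (leq_trans _ card_v1) ?addn2.
- apply: (normalized_le weight_gt0 weight_bd).
  apply: le_trans (half_pow_mulSn _ deg_v1) _.
  apply: ler_wpMn2l; first by rewrite exprn_ge0.
  by rewrite -ltnS (leq_trans _ (leq_card_setD1 (L v1) i)) // -addn2.
Qed.

Lemma Pstep_deg2_bounds S L v i : reachable S L v -> deg S v = 2%N ->
  1/13 <= Pstep adj nbr rec S L v i <= 1/2.
Proof.
move=> reach_v deg2; have := size_nbr S v; have := nbr_uniq S v; rewrite deg2 /Pstep.
case nbr_v: (nbr S v) => [//|a [//|b [|//]]] /=; rewrite andbT inE => ab _.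
have a_nbr : a \in nbr S v by rewrite nbr_v mem_head.
have b_nbr : b \in nbr S v by rewrite nbr_v !inE eqxx orbT.
have ba : b != a by rewrite eq_sym.
by case: ifP => _; [|case: ifP => _]; exact: Pstep_deg2_ordered_bounds.
Qed.

End StepBounds.

Definition P_floor (d : nat) : rat := if d == 2%N then 1/13 else 1/6.

Lemma P_notin S L v i D : i \notin L v -> P adj nbr S L v i D = 0.
Proof. by case: D => /= [|D] ->. Qed.

Lemma P_floor_bounds d : 0 <= P_floor d <= 1/6.
Proof. by rewrite /P_floor; case: ifP. Qed.

Lemma uniform_value_bounds S L v : reachable S L v ->
  P_floor (deg S v) <= 1 / (#|L v|%:R : rat) <= 1/2.
Proof.
move=> reach_v; have /andP[card_ge card_le] := card_list_bounds reach_v.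
have card_bd : (2 <= #|L v| <= 4)%N by apply/andP; split => //; lia.
have /andP[? ?] := inv_nat_bounds rat card_bd.
by have /andP[? ?] := P_floor_bounds (deg S v); apply/andP; split; lra.
Qed.

Lemma P_bounds D S L v i : reachable S L v -> i \in L v ->
  P_floor (deg S v) <= P adj nbr S L v i D <= 1/2.
Proof.
elim: D S L v i => [|D IH] S L v i reach_v iL /=; rewrite iL /=.
  exact: uniform_value_bounds.
have rec_bd : bounded_by_half (fun S L v i => P adj nbr S L v i D).
  move=> S' L' v' i' reach'.
  have [iL'|iL'] := boolP (i' \in L' v'); last by rewrite P_notin.
  have /andP[? ?] := IH S' L' v' i' reach' iL'.
  by have /andP[? ?] := P_floor_bounds (deg S' v'); apply/andP; split; lra.
case: eqP => [_|deg_ne0]; first exact: uniform_value_bounds.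
have [_ _ deg_le2 _] := reach_v.
have [deg1|deg2] : deg S v = 1%N \/ deg S v = 2%N by lia.
- by rewrite deg1; apply: Pstep_deg1_bounds.
- by rewrite deg2; apply: Pstep_deg2_bounds.
Qed.

End Procedure.

Theorem proposition8 (V : finType) (adj : rel V)
    (adj_sym : symmetric adj) (adj_irr : irreflexive adj)
    (nbr : {set V} -> V -> seq V) (Hnbr : nbr_order adj nbr)
    (L : V -> {set 'I_4}) (v : V) (i : 'I_4) (D : nat) :
  reachable adj [set: V] L v -> i \in L v ->
  (deg adj [set: V] v = 2%N -> 1 / 13%:R <= P adj nbr [set: V] L v i D) /\
  ((deg adj [set: V] v <= 1)%N -> 1 / 6%:R <= P adj nbr [set: V] L v i D).
Proof.
move=> reach_v iL.
have /andP[floor_le _] := P_bounds adj_sym adj_irr Hnbr D reach_v iL.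
split=> [deg2 | deg_le1]; move: floor_le; rewrite /P_floor.
- by rewrite deg2.
- by rewrite ifN //; lia.
Qed.
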